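(* Let $n\ge2$ and $q_1,q_2\in\mathbb{C}$ with $q_1q_2\ne0$, put $q=-q_2/q_1$, and assume $[n]_q=1+q+\cdots+q^{n-1}\ne0$. Then the algebra $\operatorname{End}_{B_n}(\mathbf{E})$ of linear endomorphisms of $\mathbf{E}$ commuting with the generalized Burau action of $B_n$ is spanned by the identity operator $\mathrm{id}_{\mathbf{E}}$ and the operator $P$ whose matrix with respect to $e_1,\dots,e_n$ is the $n\times n$ matrix all of whose rows equal $(1,q,q^2,\dots,q^{n-1})$.
   Context: Artin's braid group $B_n$ has generators $\sigma_1,\dots,\sigma_{n-1}$ with relations $\sigma_i\sigma_{i+1}\sigma_i=\sigma_{i+1}\sigma_i\sigma_{i+1}$, $\sigma_i\sigma_j=\sigma_j\sigma_i$ ($|i-j|>1$). $\mathbf{E}=\mathbb{C}^n$ with basis $e_1,\dots,e_n$; the generalized Burau representation is $\sigma_ie_j=q_1e_j$ ($j\ne i,i+1$), $\sigma_ie_{i+1}=-q_2e_i$, $\sigma_ie_i=(q_1+q_2)e_i+q_1e_{i+1}$. *)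

(* The complex numbers are modelled as R[i] = complex R
   for an arbitrary realType R (every realType is the field of real numbers). *)
From HB Require Import structures.
From mathcomp Require Import all_boot all_order all_algebra.
From mathcomp Require Import reals.
From mathcomp.real_closed Require Import complex.
Set Implicit Arguments. Unset Strict Implicit. Unset Printing Implicit Defensive.
Import Order.TTheory GRing.Theory Num.Theory.
Local Open Scope ring_scope.

(* Matrix of the generalized Burau generator sigma_{i+1} (0-based index i,
   with i.+1 < n) on E = C^n, w.r.t. the basis e_1..e_n, acting on column
   vectors: column j is the coordinate vector of sigma e_j.
     sigma_i e_j     = q1 e_j               (j <> i, i+1)
     sigma_i e_{i+1} = - q2 e_i
     sigma_i e_i     = (q1 + q2) e_i + q1 e_{i+1}                       *)
Definition burau_gen (F : nzRingType) (n : nat) (q1 q2 : F) (i : nat)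
  : 'M[F]_n :=
  \matrix_(k < n, j < n)
    (if (j : nat) == i then
       (if (k : nat) == i then q1 + q2 else if (k : nat) == i.+1 then q1 else 0)
     else if (j : nat) == i.+1 then
       (if (k : nat) == i then - q2 else 0)
     else (if k == j then q1 else 0)).

(* End_{B_n}(E): endomorphisms commuting with the action of every generator
   sigma_1, ..., sigma_{n-1} (equivalently with all of B_n). *)
Definition commutes_with_burau (F : nzRingType) (n : nat) (q1 q2 : F)
  (A : 'M[F]_n) : Prop :=
  forall i : nat, (i.+1 < n)%N -> A *m burau_gen n q1 q2 i = burau_gen n q1 q2 i *m A.

Definition Pmx (F : nzRingType) (n : nat) (q : F) : 'M[F]_n :=
  \matrix_(k < n, j < n) q ^+ j.

Definition qint (F : nzRingType) (n : nat) (q : F) : F := \sum_(i < n) q ^+ i.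

From mathcomp Require Import all_boot all_order all_algebra ring.
From mathcomp Require Import reals.
From mathcomp.real_closed Require Import complex.
Set Implicit Arguments. Unset Strict Implicit. Unset Printing Implicit Defensive.
Import Order.TTheory GRing.Theory Num.Theory.
Local Open Scope ring_scope.

(* Each generator is a rank-one perturbation of a scalar: sigma_i = q1 + u_i v_i
   with u_i = q2 e_i + q1 e_(i+1) and v_i = e_i^* - e_(i+1)^*.  A matrix commuting
   with a nonzero rank-one matrix u v has u as eigenvector and v as left
   eigenvector, for the same eigenvalue.  As v_i u_(i+1) = -q2 <> 0, these
   eigenvalues agree for consecutive generators, so A - c for a single scalar c
   kills every u_i and every v_i.  Killed by the v_i on the left, its rows are
   all equal; killed by the u_i, each row is geometric with ratio q = -q2/q1;
   so A - c is a multiple of P.  Conversely P u_i = 0 and v_i P = 0. *)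

Lemma ord_geometric (R : pzSemiRingType) (m : nat) (q : R) (f : 'I_m.+1 -> R) :
  (forall i : 'I_m, f (lift ord0 i) = q * f (widen_ord (leqnSn m) i)) ->
  forall j : 'I_m.+1, f j = q ^+ j * f ord0.
Proof.
move=> f_succ [j]; elim: j => [|j IHj] lt_j_m1 /=.
  by rewrite expr0 mul1r; congr f; apply: val_inj.
have lt_j_m : (j < m)%N by [].
have -> : Ordinal lt_j_m1 = lift ord0 (Ordinal lt_j_m) by apply: val_inj.
rewrite f_succ exprS -mulrA -(IHj (ltnW lt_j_m1)); congr (_ * f _).
exact: val_inj.
Qed.

Lemma commute_rank1P (F : fieldType) (n : nat) (A : 'M[F]_n) (u : 'cV_n) (v : 'rV_n) :
  u != 0 -> v != 0 ->
  A *m (u *m v) = (u *m v) *m A <-> exists c, A *m u = c *: u /\ v *m A = c *: v.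
Proof.
move=> u_neq0 v_neq0; split=> [commA | [c [Au vA]]]; last first.
  by rewrite mulmxA Au -mulmxA vA -scalemxAl scalemxAr.
have {}commA : A *m u *m v = u *m (v *m A) by rewrite -mulmxA commA mulmxA.
have {}commA k j : (A *m u) k 0 * v 0 j = u k 0 * (v *m A) 0 j.
  have := congr1 (fun M : 'M[F]_n => M k j) commA.
  by rewrite [in X in X -> _]mxE [in X in _ = X -> _]mxE !big_ord1.
move: u_neq0 v_neq0 => /matrix0Pn[k0 [l]] + /matrix0Pn[l' [j0]].
rewrite (ord1 l) (ord1 l') => {l l'} uk0_neq0 vj0_neq0.
pose c := (v *m A) 0 j0 / v 0 j0.
have Au : A *m u = c *: u.
  apply/matrixP => k l; rewrite ord1 [RHS]mxE /c mulrC mulrA -commA.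
  by rewrite mulfK.
exists c; split=> //; apply/matrixP => l j; rewrite ord1 [RHS]mxE.
apply: (mulfI uk0_neq0); rewrite -commA Au mxE.
by rewrite mulrCA mulrA.
Qed.

Section BurauCommutant.
Variables (F : fieldType) (m : nat) (q1 q2 : F).
Hypotheses (q1_neq0 : q1 != 0) (q2_neq0 : q2 != 0).

(* E = F^(m+2); the generator indexed by i : 'I_m.+1 (sigma_(i+1) in the paper)
   moves the coordinates lo i = i and hi i = i + 1. *)
Local Notation lo i := (widen_ord (leqnSn _) i).
Local Notation hi i := (lift ord0 i).
Local Notation q := (- q2 / q1).
Local Notation P := (Pmx m.+2 q).

Definition burau_u (i : 'I_m.+1) : 'cV[F]_m.+2 :=
  q2 *: delta_mx (lo i) 0 + q1 *: delta_mx (hi i) 0.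

Definition burau_v (i : 'I_m.+1) : 'rV[F]_m.+2 := 'e_(lo i) - 'e_(hi i).

Lemma burau_genE (i : 'I_m.+1) :
  burau_gen m.+2 q1 q2 i = q1%:M + burau_u i *m burau_v i.
Proof.
apply/matrixP => -[k ?] [j ?].
rewrite !mxE big_ord1 !mxE -!val_eqE /= /bump /= add1n !andbT.
have [->|ji] := eqVneq j i; [|have [->|ji1] := eqVneq j i.+1];
  have [->|ki] := eqVneq k i; try have [->|ki1] := eqVneq k i.+1;
  rewrite ?eqxx ?(ltn_eqF (ltnSn _)) ?(gtn_eqF (ltnSn _)) ?(negbTE ji) ?(negbTE ki) //=.
all: by do ?case: (_ == _); rewrite /=; ring.
Qed.

Lemma commutes_with_burauP (A : 'M[F]_m.+2) :
  commutes_with_burau q1 q2 A <->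
  forall i : 'I_m.+1, A *m (burau_u i *m burau_v i) = (burau_u i *m burau_v i) *m A.
Proof.
have gen_commP (i : 'I_m.+1) : A *m burau_gen m.+2 q1 q2 i = burau_gen m.+2 q1 q2 i *m A <->
    A *m (burau_u i *m burau_v i) = (burau_u i *m burau_v i) *m A.
  rewrite burau_genE; set N := _ *m burau_v i.
  rewrite mulmxDr mulmxDl mul_mx_scalar mul_scalar_mx.
  by split=> [/addrI | ->].
split=> [commA i | commA i lt_i1_m2]; first by apply/gen_commP/commA; rewrite ltnS ltn_ord.
exact: (gen_commP (@Ordinal m.+1 i lt_i1_m2)).2 (commA _).
Qed.

Lemma burau_u_neq0 (i : 'I_m.+1) : burau_u i != 0.
Proof.
apply: contraNneq q1_neq0 => /matrixP/(_ (hi i) 0).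
rewrite !mxE !eqxx -val_eqE /= /bump /= add1n (gtn_eqF (ltnSn i)).
by rewrite mulr0 mulr1 add0r => ->.
Qed.

Lemma burau_v_neq0 (i : 'I_m.+1) : burau_v i != 0.
Proof.
apply: contraTneq isT => /matrixP/(_ 0 (lo i)).
rewrite !mxE !eqxx -val_eqE /= /bump /= add1n (ltn_eqF (ltnSn i)) subr0.
by move/eqP; rewrite oner_eq0.
Qed.

Lemma mulmx_burau_u n (M : 'M[F]_(n, m.+2)) (i : 'I_m.+1) :
  M *m burau_u i = q2 *: col (lo i) M + q1 *: col (hi i) M.
Proof. by rewrite mulmxDr -!scalemxAr -!colE. Qed.

Lemma burau_v_mulmx n (M : 'M[F]_(m.+2, n)) (i : 'I_m.+1) :
  burau_v i *m M = row (lo i) M - row (hi i) M.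
Proof. by rewrite mulmxBl -!rowE. Qed.

Lemma Pmx_burau_u (i : 'I_m.+1) : P *m burau_u i = 0.
Proof.
apply/matrixP => k l; rewrite mulmx_burau_u !mxE lift0 /=.
by rewrite exprS mulrA [q1 * _]mulrC divfK // -mulrDl addrN mul0r.
Qed.

Lemma burau_v_Pmx (i : 'I_m.+1) : burau_v i *m P = 0.
Proof. by apply/matrixP => l j; rewrite burau_v_mulmx !mxE subrr. Qed.

Lemma burau_v_mulmx_u_succ (i : 'I_m) :
  burau_v (lo i) *m burau_u (hi i) = (- q2)%:M.
Proof.
apply/matrixP => a b; rewrite !ord1 burau_v_mulmx !mxE -!val_eqE /= /bump /= !add1n.
by rewrite !andbT eqxx !(ltn_eqF (ltnSn _)) (ltn_eqF (leqnSn _)) /=; ring.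
Qed.

Lemma burau_eigen_succ (A : 'M[F]_m.+2) (i : 'I_m) (c c' : F) :
  burau_v (lo i) *m A = c *: burau_v (lo i) ->
  A *m burau_u (hi i) = c' *: burau_u (hi i) -> c = c'.
Proof.
move=> vA Au.
have : c *: (burau_v (lo i) *m burau_u (hi i)) = c' *: (burau_v (lo i) *m burau_u (hi i)).
  by rewrite scalemxAl -vA -mulmxA Au scalemxAr.
rewrite burau_v_mulmx_u_succ => /matrixP/(_ 0 0); rewrite !mxE eqxx !mulr1n.
by apply: mulIf; rewrite oppr_eq0.
Qed.

Lemma commutes_with_burau_shift (A : 'M[F]_m.+2) : commutes_with_burau q1 q2 A ->
  exists c, forall i, (A - c%:M) *m burau_u i = 0 /\ burau_v i *m (A - c%:M) = 0.
Proof.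
move/commutes_with_burauP => commA.
have /fin_all_exists [c eig_c] i : exists c,
    A *m burau_u i = c *: burau_u i /\ burau_v i *m A = c *: burau_v i.
  exact/(commute_rank1P A (burau_u_neq0 i) (burau_v_neq0 i)).
have c_const i : c i = c ord0.
  rewrite (@ord_geometric _ _ 1 c) ?expr1n ?mul1r // => j.
  by rewrite mul1r (burau_eigen_succ (eig_c (lo j)).2 (eig_c (hi j)).1).
exists (c ord0) => i; have [Au vA] := eig_c i.
by rewrite mulmxBl mulmxBr mul_scalar_mx mul_mx_scalar Au vA c_const !subrr.
Qed.

Lemma burau_annihilator_Pmx (M : 'M[F]_m.+2) :
  (forall i, M *m burau_u i = 0 /\ burau_v i *m M = 0) -> M = M ord0 ord0 *: P.
Proof.
move=> annM.
have rowsE j i : M (hi i) j = 1 * M (lo i) j.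
  have /matrixP/(_ 0 j) := (annM i).2; rewrite burau_v_mulmx !mxE.
  by move/eqP; rewrite subr_eq0 mul1r => /eqP.
have colsE k i : M k (hi i) = q * M k (lo i).
  have /matrixP/(_ k 0) := (annM i).1; rewrite mulmx_burau_u !mxE.
  move/eqP; rewrite addrC addr_eq0 => /eqP E.
  by apply: (mulfI q1_neq0); rewrite E mulrA [q1 * _]mulrC divfK // mulNr.
apply/matrixP => k j; rewrite !mxE.
have /= -> := ord_geometric (f := fun k => M k j) (rowsE j) k.
have /= -> := ord_geometric (f := M ord0) (colsE ord0) j.
by rewrite expr1n mul1r mulrC.
Qed.

Lemma burau_commutantP (A : 'M[F]_m.+2) :
  commutes_with_burau q1 q2 A <-> exists a b, A = a%:M + b *: P.
Proof.
split=> [/commutes_with_burau_shift [c /burau_annihilator_Pmx Ac_eq] | [a [b ->]]].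
  by exists c, ((A - c%:M) ord0 ord0); rewrite -Ac_eq addrC subrK.
apply/commutes_with_burauP => i.
apply/(commute_rank1P _ (burau_u_neq0 i) (burau_v_neq0 i)); exists a; split.
- by rewrite mulmxDl mul_scalar_mx -scalemxAl Pmx_burau_u scaler0 addr0.
- by rewrite mulmxDr mul_mx_scalar -scalemxAr burau_v_Pmx scaler0 addr0.
Qed.

End BurauCommutant.

Local Open Scope complex_scope.

Theorem theorem4p1 (R : realType) (n : nat) (q1 q2 : R[i]) :
  (2 <= n)%N -> q1 * q2 != 0 ->
  qint n (- q2 / q1) != 0 ->
  forall A : 'M[R[i]]_n,
    commutes_with_burau q1 q2 A <->
    exists a b : R[i], A = a%:M + b *: Pmx n (- q2 / q1).
Proof.
move=> n_ge2 q1q2_neq0 _ A.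
have [q1_neq0 q2_neq0] : q1 != 0 /\ q2 != 0.
  by apply/andP; rewrite -negb_or -mulf_eq0.
case: n n_ge2 A => [|[|m]] // _ A.
exact: burau_commutantP.
Qed.
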